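(* There do not exist a Luzin set $L\subseteq\mathbb{R}$ and a Sierpiński set $S\subseteq\mathbb{R}$ such that $L+S=\{l+s:l\in L,s\in S\}$ is a Bernstein set.
   Context: A Luzin set is $L\subseteq\mathbb{R}$ with $|L|=\mathfrak{c}$ such that $L\cap M$ is countable for every meager $M$. A Sierpiński set is $S\subseteq\mathbb{R}$ with $|S|=\mathfrak{c}$ such that $S\cap N$ is countable for every Lebesgue-null $N$. A set $B\subseteq\mathbb{R}$ is a Bernstein set if for every nonempty perfect set $P\subseteq\mathbb{R}$ both $B\cap P\neq\emptyset$ and $(\mathbb{R}\setminus B)\cap P\neq\emptyset$. *)

From Stdlib Require Import Reals.
Open Scope R_scope.

Definition countable_set (A : R -> Prop) : Prop :=
  exists f : nat -> R, forall x, A x -> exists n, f n = x.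

Definition card_continuum (A : R -> Prop) : Prop :=
  exists f : R -> R,
    (forall x, A (f x)) /\
    (forall x y, f x = f y -> x = y) /\
    (forall y, A y -> exists x, f x = y).

Definition lebesgue_null (N : R -> Prop) : Prop :=
  forall eps : R, 0 < eps ->
    exists a b : nat -> R,
      (forall n, a n <= b n) /\
      (forall x, N x -> exists n, a n < x < b n) /\
      (forall n, sum_f_R0 (fun k => b k - a k) n <= eps).

Definition nowhere_dense (D : R -> Prop) : Prop :=
  forall a b : R, a < b ->
    exists c d : R, a <= c /\ c < d /\ d <= b /\
      (forall x, c < x < d -> ~ D x).

Definition meager (M : R -> Prop) : Prop :=
  exists D : nat -> (R -> Prop),
    (forall n, nowhere_dense (D n)) /\
    (forall x, M x -> exists n, D n x).

Definition closed_set (P : R -> Prop) : Prop :=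
  forall x, ~ P x -> exists e, 0 < e /\ forall y, Rabs (y - x) < e -> ~ P y.

Definition perfect_set (P : R -> Prop) : Prop :=
  closed_set P /\
  forall x, P x -> forall e, 0 < e -> exists y, P y /\ y <> x /\ Rabs (y - x) < e.

Definition Luzin_set (L : R -> Prop) : Prop :=
  card_continuum L /\
  forall M, meager M -> countable_set (fun x => L x /\ M x).

Definition Sierpinski_set (S : R -> Prop) : Prop :=
  card_continuum S /\
  forall N, lebesgue_null N -> countable_set (fun x => S x /\ N x).

Definition Bernstein_set (B : R -> Prop) : Prop :=
  forall P : R -> Prop, perfect_set P -> (exists x, P x) ->
    (exists x, B x /\ P x) /\ (exists x, ~ B x /\ P x).

Definition sumset (A B : R -> Prop) : R -> Prop :=
  fun z => exists a b, A a /\ B b /\ z = a + b.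

(* Let C be the Cantor-type set of reals in [0, 1] whose decimal expansion uses only the
   digits 0 and 2, and let (q_n) be a dense sequence. The reals x with
   |x - q_n| < 10^-(n+k) for every k and some n form a comeager set G. If l + s lies in C
   with l in G, then for every k some s + q_n is 10^-(n+k)-close to C, and this set of s
   is null because C has only 2^m cells of length 10^-m at level m. So for l in G
   the summand s ranges over a countable subset of S, and then l lies in L ∩ (C - s), a
   Luzin set meeting a nowhere dense set; for l outside G (countably many) s lies in
   S ∩ (C - l), a Sierpiński set meeting a null set. Hence (L + S) ∩ C is countable. On the
   other hand C contains continuum many pairwise disjoint nonempty perfect sets (fix every
   other digit), and a diagonal argument finds one of them missing any given countable
   set, so a Bernstein set meets C in an uncountable set. *)

From Pilot Require Import Defs.
From Stdlib Require Import Reals Lra Lia ZArith Classical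
  FunctionalExtensionality ClassicalEpsilon Cantor.
Open Scope R_scope.

(* [Reals] also exports a [closed_set]. *)
Local Notation closed_set := Defs.closed_set.

Lemma inv10_pow_pos n : 0 < (/10) ^ n.
Proof. apply pow_lt; lra. Qed.

Lemma inv10_pow_le1 n : (/10) ^ n <= 1.
Proof. induction n; simpl; [lra|]. pose proof (inv10_pow_pos n). nra. Qed.

Lemma pow_eventually_lt (r e : R) : 0 < r < 1 -> 0 < e -> exists n, r ^ n < e.
Proof.
  intros Hr He.
  destruct (pow_lt_1_zero r ltac:(rewrite Rabs_right; lra) e He) as [n Hn].
  exists n. specialize (Hn n (le_n _)).
  rewrite Rabs_right in Hn; [exact Hn|]. apply Rle_ge, pow_le; lra.
Qed.

(** * Decimal expansions with digits 0 and 2 *)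

(* [approx n w] is the decimal 0.d_0 ... d_(n-1) with d_i = 2 w_i, and [cell n w] is the
   interval of the reals whose expansion may begin with these n digits. *)
Definition digit (b : bool) : R := if b then 2 else 0.
Definition shift (w : nat -> bool) : nat -> bool := fun i => w (S i).

Fixpoint approx (n : nat) (w : nat -> bool) : R :=
  match n with
  | O => 0
  | S n => (digit (w O) + approx n (shift w)) / 10
  end.

Definition cell (n : nat) (w : nat -> bool) (x : R) : Prop :=
  approx n w <= x <= approx n w + (/10) ^ n.

Lemma digit_bounds b : 0 <= digit b <= 2.
Proof. destruct b; simpl; lra. Qed.

Lemma approx_bounds n : forall w, 0 <= approx n w <= 2/9.
Proof.
  induction n; intro w; simpl; [lra|].
  pose proof (IHn (shift w)); pose proof (digit_bounds (w O)). lra.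
Qed.

Lemma approx_prefix n : forall w w',
  (forall i, (i < n)%nat -> w i = w' i) -> approx n w = approx n w'.
Proof.
  induction n; intros w w' H; simpl; [reflexivity|].
  rewrite (H O), (IHn (shift w) (shift w')); [reflexivity| |lia].
  intros i Hi; apply H; lia.
Qed.

Lemma cell_S n w x : cell (S n) w x <-> cell n (shift w) (10 * x - digit (w O)).
Proof.
  unfold cell; simpl. pose proof (inv10_pow_pos n). split; intros [H1 H2]; split; nra.
Qed.

(* The gap between the digits 0 and 2 is what makes cells of the same level disjoint. *)
Lemma cell_prefix n : forall w w' x, cell n w x -> cell n w' x ->
  forall i, (i < n)%nat -> w i = w' i.
Proof.
  induction n; intros w w' x H H' i Hi; [lia|].
  assert (E : w O = w' O).
  { unfold cell in H, H'; simpl in H, H'.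
    pose proof (approx_bounds n (shift w)); pose proof (approx_bounds n (shift w')).
    pose proof (inv10_pow_pos n); pose proof (inv10_pow_le1 n).
    destruct (w O), (w' O); simpl in *; auto; lra. }
  destruct i as [|i]; [exact E|].
  apply cell_S in H; apply cell_S in H'. rewrite E in H.
  exact (IHn _ _ _ H H' i ltac:(lia)).
Qed.

Lemma approx_le_S n : forall w, approx n w <= approx (S n) w.
Proof.
  induction n; intro w.
  - simpl. pose proof (digit_bounds (w O)). lra.
  - change (approx (S (S n)) w) with ((digit (w O) + approx (S n) (shift w)) / 10).
    simpl approx at 1. pose proof (IHn (shift w)). lra.
Qed.

Lemma approx_le_add n : forall m w, approx (n + m) w <= approx n w + 2/9 * (/10) ^ n.
Proof.
  induction n; intros m w; simpl.
  - pose proof (approx_bounds m w); lra.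
  - pose proof (IHn m (shift w)). lra.
Qed.

Lemma approx_le_cell n m w : approx m w <= approx n w + (/10) ^ n.
Proof.
  pose proof (inv10_pow_pos n).
  destruct (le_lt_dec n m) as [Hnm|Hmn].
  - replace m with (n + (m - n))%nat by lia. pose proof (approx_le_add n (m - n) w). lra.
  - assert (Hmono : forall d, approx m w <= approx (m + d) w).
    { induction d; [rewrite Nat.add_0_r; lra|].
      rewrite Nat.add_succ_r. pose proof (approx_le_S (m + d) w). lra. }
    pose proof (Hmono (n - m)%nat) as Hd. replace (m + (n - m))%nat with n in Hd by lia. lra.
Qed.

Lemma cell_limit w : exists y, forall n, cell n w y.
Proof.
  set (E := fun r => exists n, r = approx n w).
  assert (Hb : bound E). { exists 1. intros r [n ->]. pose proof (approx_bounds n w); lra. }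
  destruct (completeness E Hb (ex_intro _ 0 (ex_intro _ O eq_refl))) as [y [Hub Hlub]].
  exists y. intro n. split.
  - apply Hub. exists n. reflexivity.
  - apply Hlub. intros r [m ->]. apply approx_le_cell.
Qed.

Lemma approx_even n : forall w, exists m : nat, approx n w * 10 ^ n = 2 * INR m.
Proof.
  induction n; intro w.
  - exists O. simpl. lra.
  - destruct (IHn (shift w)) as [m Hm].
    exists ((if w O then 1 else 0) * 10 ^ n + m)%nat.
    rewrite plus_INR, mult_INR, pow_INR.
    simpl approx. replace (INR 10) with 10 by (simpl; lra).
    rewrite Rmult_plus_distr_l, <- Hm. destruct (w O); simpl digit; simpl INR; simpl pow; field.
Qed.

Definition level (n : nat) (Phi : (nat -> bool) -> Prop) (x : R) : Prop :=
  exists w, Phi w /\ cell n w x.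

Definition cantor_part (Phi : (nat -> bool) -> Prop) (x : R) : Prop :=
  forall n, level n Phi x.

Definition cantor : R -> Prop := cantor_part (fun _ => True).

Definition even_digits (t w : nat -> bool) : Prop := forall i, w (2 * i)%nat = t i.

Definition cantor_slice (t : nat -> bool) : R -> Prop := cantor_part (even_digits t).

Lemma closed_ext (P Q : R -> Prop) : (forall x, P x <-> Q x) -> closed_set P -> closed_set Q.
Proof.
  intros E HP x Hx. destruct (HP x) as [e [He H]]; [rewrite E; exact Hx|].
  exists e; split; [exact He|]. intros y Hy Qy. apply (H y Hy), E, Qy.
Qed.

Lemma closed_union (P Q : R -> Prop) :
  closed_set P -> closed_set Q -> closed_set (fun x => P x \/ Q x).
Proof.
  intros HP HQ x Hx.
  destruct (HP x) as [e1 [He1 H1]]; [tauto|].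
  destruct (HQ x) as [e2 [He2 H2]]; [tauto|].
  pose proof (Rmin_l e1 e2); pose proof (Rmin_r e1 e2).
  exists (Rmin e1 e2). split; [apply Rmin_pos; assumption|].
  intros y Hy [Py|Qy]; [apply (H1 y) | apply (H2 y)]; auto; lra.
Qed.

Lemma closed_affine (P : R -> Prop) c :
  closed_set P -> closed_set (fun x => P (10 * x - c)).
Proof.
  intros HP x Hx. destruct (HP _ Hx) as [e [He H]].
  exists (e / 10). split; [lra|]. intros y Hy. apply H.
  replace (10 * y - c - (10 * x - c)) with (10 * (y - x)) by ring.
  rewrite Rabs_mult, Rabs_right by lra. lra.
Qed.

Lemma closed_unit_interval : closed_set (fun x => 0 <= x <= 1).
Proof.
  intros x Hx.
  destruct (Rlt_or_le x 0) as [H|H]; [exists (- x) | exists (x - 1)];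
    (split; [lra|]); intros y Hy%Rabs_def2 Hy'; lra.
Qed.

Lemma closed_empty : closed_set (fun _ => False).
Proof. intros x _. exists 1. split; [lra | tauto]. Qed.

Lemma level_closed n : forall Phi, closed_set (level n Phi).
Proof.
  induction n; intro Phi.
  - destruct (classic (exists w, Phi w)) as [[w0 Hw0]|Hno].
    + apply (closed_ext (fun x => 0 <= x <= 1)); [|exact closed_unit_interval].
      intro x; unfold level, cell; simpl; split.
      * intro; exists w0; split; [exact Hw0 | lra].
      * intros [w [_ H]]; lra.
    + apply (closed_ext (fun _ => False)); [|exact closed_empty].
      intro x; split; [tauto|]. intros [w [Hw _]]; eauto.
  - set (cons (b : bool) (w : nat -> bool) := fun i : nat => match i with O => b | S i => w i end).
    apply (closed_ext (fun x => level n (fun w => Phi (cons false w)) (10 * x - digit false)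
                             \/ level n (fun w => Phi (cons true w)) (10 * x - digit true))).
    2: apply closed_union; apply closed_affine, IHn.
    intro x; split.
    + intros [[w [Hw H]]|[w [Hw H]]]; eexists; (split; [exact Hw|]); apply cell_S, H.
    + intros [w [Hw H%cell_S]].
      assert (Ew : cons (w O) (shift w) = w).
      { apply functional_extensionality; intros [|i]; reflexivity. }
      rewrite <- Ew in Hw.
      destruct (w O); [right | left]; exists (shift w); split; assumption.
Qed.

Lemma cantor_part_closed Phi : closed_set (cantor_part Phi).
Proof.
  intros x Hx. apply not_all_ex_not in Hx as [n Hn].
  destruct (level_closed n Phi x Hn) as [e [He H]].
  exists e; split; [exact He|]. intros y Hy Py. apply (H y Hy), Py.
Qed.

Lemma cantor_part_sub_cantor Phi x : cantor_part Phi x -> cantor x.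
Proof. intros H n. destruct (H n) as [w [_ Hw]]. exists w; split; [exact I | exact Hw]. Qed.

Lemma cantor_part_of_digits Phi w :
  Phi w -> exists y, cantor_part Phi y /\ forall n, cell n w y.
Proof.
  intro Hw. destruct (cell_limit w) as [y Hy].
  exists y; split; [|exact Hy]. intro n. exists w; split; [exact Hw | apply Hy].
Qed.

Lemma cantor_slice_nonempty t : exists x, cantor_slice t x.
Proof.
  destruct (cantor_part_of_digits (even_digits t) (fun i => t (Nat.div2 i))) as [y [Hy _]].
  - intro i. rewrite Nat.div2_double. reflexivity.
  - exists y; exact Hy.
Qed.

(* Flipping the odd digit 2n+1 of a point of the slice gives a different point of the
   slice in the same level-n cell. *)
Lemma cantor_slice_perfect t : perfect_set (cantor_slice t).
Proof.
  split; [apply cantor_part_closed|].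
  intros x Hx e He.
  destruct (pow_eventually_lt (/10) e ltac:(lra) He) as [n Hn].
  destruct (Hx n) as [w [Hw Hxw]].
  set (p := (2 * n + 1)%nat).
  set (flip b := fun i => if Nat.eqb i p then b else w i).
  assert (Hflip : forall b, even_digits t (flip b) /\ approx n (flip b) = approx n w).
  { intro b; split.
    - intro i. unfold flip. destruct (Nat.eqb_spec (2 * i) p); [unfold p in *; lia|]. apply Hw.
    - apply approx_prefix. intros i Hi. unfold flip.
      destruct (Nat.eqb_spec i p); [unfold p in *; lia | reflexivity]. }
  destruct (Hflip false) as [Hp1 C1]; destruct (Hflip true) as [Hp2 C2].
  destruct (cantor_part_of_digits _ _ Hp1) as [y1 [Q1 I1]].
  destruct (cantor_part_of_digits _ _ Hp2) as [y2 [Q2 I2]].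
  assert (Hne : y1 <> y2).
  { intros <-. assert (E : flip false p = flip true p) by (apply (cell_prefix (S p) _ _ y1); auto).
    unfold flip in E. rewrite Nat.eqb_refl in E. discriminate. }
  pose proof (I1 n) as J1; pose proof (I2 n) as J2. unfold cell in J1, J2, Hxw.
  rewrite C1 in J1; rewrite C2 in J2.
  destruct (Req_dec y1 x) as [<-|E].
  - exists y2. repeat split; [exact Q2 | congruence | apply Rabs_def1; lra].
  - exists y1. repeat split; [exact Q1 | exact E | apply Rabs_def1; lra].
Qed.

Lemma cantor_slice_disjoint t t' x : cantor_slice t x -> cantor_slice t' x -> t = t'.
Proof.
  intros H H'. apply functional_extensionality. intro i.
  destruct (H (S (2 * i))) as [w [Hw Iw]].
  destruct (H' (S (2 * i))) as [w' [Hw' Iw']].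
  rewrite <- (Hw i), <- (Hw' i). apply (cell_prefix _ _ _ _ Iw Iw'). lia.
Qed.

(** * Bernstein sets and the Cantor set *)

Lemma diagonal_avoid (X : Type) (Q : (nat -> bool) -> X -> Prop) :
  (forall t t' x, Q t x -> Q t' x -> t = t') ->
  forall e : nat -> X, exists d, forall n, ~ Q d (e n).
Proof.
  intros Hdisj e.
  set (d n := if excluded_middle_informative (exists t, Q t (e n) /\ t n = true)
              then false else true).
  exists d. intros n Hd.
  assert (Hdn : d n = true <-> ~ exists t, Q t (e n) /\ t n = true).
  { unfold d. destruct (excluded_middle_informative _); split; intuition discriminate. }
  destruct (classic (exists t, Q t (e n) /\ t n = true)) as [[t [Qt Tt]]|Hno].
  - assert (En : d n = false).
    { destruct (d n); [|reflexivity]. exfalso. apply (proj1 Hdn eq_refl). eauto. }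
    rewrite (Hdisj _ _ _ Qt Hd), En in Tt. discriminate.
  - apply Hno. exists d. split; [exact Hd | apply Hdn, Hno].
Qed.

Lemma bernstein_cantor_uncountable B :
  Bernstein_set B -> ~ countable_set (fun x => B x /\ cantor x).
Proof.
  intros HB [e He].
  destruct (diagonal_avoid _ cantor_slice cantor_slice_disjoint e) as [d Hd].
  destruct (HB _ (cantor_slice_perfect d) (cantor_slice_nonempty d)) as [[x [Bx Px]] _].
  destruct (He x (conj Bx (cantor_part_sub_cantor _ x Px))) as [n <-].
  exact (Hd n Px).
Qed.

(** * The Cantor set is small *)

Lemma cantor_nonneg y : cantor y -> 0 <= y.
Proof. intro H. destruct (H O) as [w [_ Hw]]. unfold cell in Hw; simpl in Hw; lra. Qed.

(* Every level-n cell starts at an even multiple of 10^-n and has length 10^-n, so the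
   intervals ((2m+1) 10^-n, (2m+2) 10^-n) avoid the Cantor set. *)
Lemma cantor_nowhere_dense : nowhere_dense cantor.
Proof.
  intros a b Hab.
  destruct (Rlt_or_le a 0) as [Ha|Ha].
  { exists a, (Rmin b 0). pose proof (Rmin_l b 0); pose proof (Rmin_r b 0).
    repeat split; try lra; [apply Rmin_glb_lt; lra|].
    intros y Hy Cy. pose proof (cantor_nonneg y Cy). lra. }
  destruct (pow_eventually_lt (/10) ((b - a) / 4) ltac:(lra) ltac:(lra)) as [n Hn].
  set (K := 10 ^ n).
  assert (HK : 0 < K) by (apply pow_lt; lra).
  assert (Hd : (/10) ^ n = / K) by (unfold K; rewrite pow_inv; reflexivity).
  rewrite Hd in Hn.
  set (z := up (a * K / 2)).
  destruct (archimed (a * K / 2)) as [Hz1 Hz2]. fold z in Hz1, Hz2.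
  assert (HKi : 0 < / K) by (apply Rinv_0_lt_compat; exact HK).
  assert (KK : K * / K = 1) by (field; lra).
  exists ((2 * IZR z + 1) * / K), ((2 * IZR z + 2) * / K).
  assert (A1 : a < 2 * IZR z * / K).
  { replace a with (a * K / 2 * 2 * / K) by (field; lra). nra. }
  assert (A2 : 2 * IZR z * / K <= a + 2 * / K).
  { replace a with (a * K / 2 * 2 * / K) by (field; lra). nra. }
  repeat split; try nra.
  intros y [Hy1 Hy2] Cy.
  destruct (Cy n) as [w [_ [Hw1 Hw2]]].
  destruct (approx_even n w) as [m Hm]. fold K in Hm.
  assert (Ec : approx n w = 2 * INR m * / K) by (rewrite <- Hm; field; lra).
  rewrite Ec, Hd in *.
  assert (Hmz : IZR z < INR m).
  { assert (2 * IZR z + 1 < 2 * INR m + 1) by (apply (Rmult_lt_reg_r (/K)); nra). lra. }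
  rewrite INR_IZR_INZ in Hmz, Hw1. apply lt_IZR in Hmz.
  assert (Hle : IZR (z + 1) <= IZR (Z.of_nat m)) by (apply IZR_le; lia).
  rewrite plus_IZR in Hle. simpl in Hle. nra.
Qed.

Definition near_translates (C : R -> Prop) (q : nat -> R) (y : R) : Prop :=
  forall k, exists n z, C z /\ Rabs (z - (y + q n)) < (/10) ^ (n + k).

Lemma binary_prefix n : forall w : nat -> bool,
  exists j, (j < 2 ^ n)%nat /\ forall i, (i < n)%nat -> Nat.testbit j i = w i.
Proof.
  induction n; intro w.
  - exists O. split; [simpl; lia | intros; lia].
  - destruct (IHn (shift w)) as [j [Hj Hb]].
    exists (2 * j + (if w O then 1 else 0))%nat. split; [destruct (w O); simpl; lia|].
    intros [|i] Hi; destruct (w O) eqn:E0.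
    + apply Nat.testbit_odd_0.
    + rewrite Nat.add_0_r. apply Nat.testbit_even_0.
    + rewrite Nat.testbit_odd_succ by lia. apply Hb; lia.
    + rewrite Nat.add_0_r, Nat.testbit_even_succ by lia. apply Hb; lia.
Qed.

(* For p >= 2^k, the p-th covering interval belongs to the level m = log2 p cell whose
   digits are the binary digits of p - 2^m, translated by -q (m - k) and enlarged to
   length 3 10^-m <= 12/p - 12/(p+1). *)
Definition cover_mid (q : nat -> R) (k p : nat) : R :=
  approx (Nat.log2 p) (Nat.testbit (p - 2 ^ Nat.log2 p)) - q (Nat.log2 p - k)%nat.

Definition cover_lo (q : nat -> R) (k p : nat) : R :=
  if (2 ^ k <=? p)%nat then cover_mid q k p - (/10) ^ Nat.log2 p else 0.

Definition cover_hi (q : nat -> R) (k p : nat) : R :=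
  if (2 ^ k <=? p)%nat then cover_mid q k p + 2 * (/10) ^ Nat.log2 p else 0.

Definition cover_budget (k p : nat) : R := 12 / INR (Nat.max p (2 ^ k)).

Lemma sum_telescope (F : nat -> R) n : sum_f_R0 (fun p => F p - F (S p)) n = F O - F (S n).
Proof. induction n; simpl; [ring|]. rewrite IHn. ring. Qed.

Lemma cover_length q k p :
  cover_hi q k p - cover_lo q k p <= cover_budget k p - cover_budget k (S p).
Proof.
  unfold cover_hi, cover_lo, cover_budget.
  destruct (Nat.leb_spec (2 ^ k) p) as [H|H]; [|rewrite !Nat.max_r by lia; lra].
  rewrite !Nat.max_l by lia.
  assert (Hp : (0 < p)%nat) by (pose proof (Nat.pow_nonzero 2 k); lia).
  destruct (Nat.log2_spec p Hp) as [_ H2].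
  set (m := Nat.log2 p) in *.
  assert (HS : INR (S p) <= 2 ^ S m).
  { rewrite <- (pow_INR 2). replace (INR 2) with 2 by (simpl; lra). apply le_INR. lia. }
  assert (Hp0 : 0 < INR p) by (apply lt_0_INR; lia).
  rewrite S_INR in *.
  replace (12 / INR p - 12 / (INR p + 1)) with (12 / (INR p * (INR p + 1))) by (field; lra).
  assert (H4 : INR p * (INR p + 1) <= 4 * 4 ^ m).
  { replace (4 * 4 ^ m) with (2 ^ S m * 2 ^ S m); [apply Rmult_le_compat; lra|].
    rewrite <- Rpow_mult_distr. simpl. replace (2 * 2) with 4 by ring. ring. }
  assert (H410 : (/10) ^ m * 4 ^ m <= 1).
  { rewrite <- Rpow_mult_distr. clear. induction m as [|d IH]; simpl; nra. }
  pose proof (inv10_pow_pos m).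
  apply (Rmult_le_reg_r (INR p * (INR p + 1))); [nra|].
  unfold Rdiv. rewrite Rmult_assoc, Rinv_l by nra. nra.
Qed.

Lemma cantor_near_translates_covered q k y : near_translates cantor q y ->
  exists p, cover_lo q k p < y < cover_hi q k p.
Proof.
  intro Hy. destruct (Hy k) as [n [z [Cz Hz%Rabs_def2]]].
  set (m := (n + k)%nat) in *.
  destruct (Cz m) as [w [_ Hw]].
  destruct (binary_prefix m w) as [j [Hj Hb]].
  exists (2 ^ m + j)%nat.
  assert (Hlog : Nat.log2 (2 ^ m + j) = m) by (apply Nat.log2_unique; simpl; lia).
  assert (Hk : (2 ^ k <= 2 ^ m + j)%nat).
  { pose proof (Nat.pow_le_mono_r 2 k m ltac:(lia) ltac:(unfold m; lia)). lia. }
  unfold cover_lo, cover_hi, cover_mid.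
  apply Nat.leb_le in Hk. rewrite Hk, Hlog.
  replace (2 ^ m + j - 2 ^ m)%nat with j by lia.
  replace (m - k)%nat with n by (unfold m; lia).
  rewrite (approx_prefix m (Nat.testbit j) w Hb).
  unfold cell in Hw. lra.
Qed.

Lemma cantor_near_translates_null q : lebesgue_null (near_translates cantor q).
Proof.
  intros eps He.
  destruct (pow_eventually_lt (/2) (eps / 12) ltac:(lra) ltac:(lra)) as [k Hk].
  exists (cover_lo q k), (cover_hi q k). split; [|split].
  - intro p. unfold cover_lo, cover_hi. destruct (2 ^ k <=? p)%nat; [|lra].
    pose proof (inv10_pow_pos (Nat.log2 p)). lra.
  - intros y Hy. exact (cantor_near_translates_covered q k y Hy).
  - intro n.
    apply Rle_trans with (sum_f_R0 (fun p => cover_budget k p - cover_budget k (S p)) n).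
    { apply sum_Rle. intros; apply cover_length. }
    rewrite sum_telescope. unfold cover_budget. rewrite Nat.max_0_l.
    assert (0 < 12 / INR (Nat.max (S n) (2 ^ k))).
    { apply Rdiv_lt_0_compat; [lra|]. apply lt_0_INR. lia. }
    assert (12 / INR (2 ^ k) = 12 * (/2) ^ k).
    { rewrite pow_INR, pow_inv. simpl INR. replace (1 + 1) with 2 by ring. reflexivity. }
    lra.
Qed.

(** * Reals rapidly approximated by a dense sequence *)

Definition rapidly_approximated (q : nat -> R) (x : R) : Prop :=
  forall k, exists n, Rabs (x - q n) < (/10) ^ (n + k).

Lemma not_rapidly_approximated_meager q :
  (forall a b, a < b -> exists n, a < q n < b) ->
  meager (fun x => ~ rapidly_approximated q x).
Proof.
  intro Hq.
  exists (fun k x => forall n, (/10) ^ (n + k) <= Rabs (x - q n)). split.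
  - intros k a b Hab.
    destruct (Hq a b Hab) as [n Hn].
    pose proof (inv10_pow_pos (n + k)). set (r := (/10) ^ (n + k)) in *.
    exists (Rmax a (q n - r)), (Rmin b (q n + r)).
    pose proof (Rmax_l a (q n - r)); pose proof (Rmax_r a (q n - r)).
    pose proof (Rmin_l b (q n + r)); pose proof (Rmin_r b (q n + r)).
    repeat split; try lra; [apply Rmax_lub_lt; apply Rmin_glb_lt; lra|].
    intros x [Hx1 Hx2] Hd. specialize (Hd n). fold r in Hd.
    assert (Rabs (x - q n) < r) by (apply Rabs_def1; lra). lra.
  - intros x Hx. apply not_all_ex_not in Hx as [k Hk]. exists k. intro n.
    apply Rnot_lt_le. intro H. apply Hk. exists n. exact H.
Qed.

Definition rational_enum (p : nat) : R :=
  let (i, j) := Cantor.of_nat p in INR i / INR (S j) - INR j.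

Lemma rational_enum_dense a b : a < b -> exists p, a < rational_enum p < b.
Proof.
  intro Hab.
  destruct (INR_unbounded (Rmax (- a) (/ (b - a)))) as [j Hj].
  pose proof (Rmax_l (- a) (/ (b - a))); pose proof (Rmax_r (- a) (/ (b - a))).
  set (d := INR (S j)). assert (Hd : d = INR j + 1) by apply S_INR. pose proof (pos_INR j).
  assert (Hgap : 1 < (b - a) * d).
  { assert (Hinv : / (b - a) < INR j) by lra.
    apply (Rmult_lt_compat_l (b - a)) in Hinv; [|lra]. rewrite Rinv_r in Hinv by lra. nra. }
  destruct (archimed ((a + INR j) * d)) as [Hu1 Hu2].
  set (z := up ((a + INR j) * d)) in *.
  assert (Hz : (0 < z)%Z) by (apply lt_IZR; nra).
  exists (Cantor.to_nat (Z.to_nat z, j)).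
  unfold rational_enum. rewrite Cantor.cancel_of_to, INR_IZR_INZ, Z2Nat.id by lia. fold d.
  replace (IZR z / d - INR j) with ((IZR z - INR j * d) * / d) by (field; lra).
  assert (Hdd : d * / d = 1) by (field; lra). assert (0 < / d) by (apply Rinv_0_lt_compat; lra).
  split; apply (Rmult_lt_reg_r d); try lra; rewrite Rmult_assoc, (Rmult_comm (/ d)), Hdd; nra.
Qed.

Lemma countable_sub (P Q : R -> Prop) :
  (forall x, P x -> Q x) -> countable_set Q -> countable_set P.
Proof. intros H [f Hf]. exists f. intros x Px. apply Hf, H, Px. Qed.

Lemma countable_union (P Q : R -> Prop) :
  countable_set P -> countable_set Q -> countable_set (fun x => P x \/ Q x).
Proof.
  intros [f Hf] [g Hg].
  exists (fun n => if Nat.even n then f (Nat.div2 n) else g (Nat.div2 n)).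
  intros x [Px|Qx].
  - destruct (Hf x Px) as [n <-]. exists (2 * n)%nat.
    rewrite Nat.even_mul, Nat.div2_double. reflexivity.
  - destruct (Hg x Qx) as [n <-]. exists (S (2 * n))%nat.
    rewrite Nat.even_succ, Nat.odd_mul, Nat.div2_succ_double. reflexivity.
Qed.

Lemma countable_bigcup (P : nat -> R -> Prop) :
  (forall i, countable_set (P i)) -> countable_set (fun x => exists i, P i x).
Proof.
  intro H.
  set (F i := proj1_sig (constructive_indefinite_description _ (H i))).
  assert (HF : forall i x, P i x -> exists n, F i n = x).
  { intro i. exact (proj2_sig (constructive_indefinite_description _ (H i))). }
  exists (fun p => let (i, n) := Cantor.of_nat p in F i n).
  intros x [i Px]. destruct (HF i x Px) as [n <-].
  exists (Cantor.to_nat (i, n)). rewrite Cantor.cancel_of_to. reflexivity.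
Qed.

Lemma countable_translate (A : R -> Prop) c :
  countable_set A -> countable_set (fun x => A (x - c)).
Proof.
  intros [f Hf]. exists (fun n => f n + c).
  intros x Ax. destruct (Hf _ Ax) as [n Hn]. exists n. rewrite Hn. ring.
Qed.

Lemma nowhere_dense_translate (D : R -> Prop) c :
  nowhere_dense D -> nowhere_dense (fun y => D (y + c)).
Proof.
  intros H a b Hab.
  destruct (H (a + c) (b + c) ltac:(lra)) as [u [v [H1 [H2 [H3 H4]]]]].
  exists (u - c), (v - c). repeat split; try lra.
  intros y Hy. apply H4. lra.
Qed.

Lemma meager_of_nowhere_dense (D : R -> Prop) : nowhere_dense D -> meager D.
Proof. intro H. exists (fun _ => D). split; [auto|]. intros x Hx; exists O; exact Hx. Qed.

(** * Luzin plus Sierpiński *)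

Lemma near_translates_of_sum C q l s :
  rapidly_approximated q l -> C (l + s) -> near_translates C q s.
Proof.
  intros Hl Cz k. destruct (Hl k) as [n Hn]. exists n, (l + s). split; [exact Cz|].
  replace (l + s - (s + q n)) with (l - q n) by ring. exact Hn.
Qed.

Lemma near_translates_const C c y : C (c + y) -> near_translates C (fun _ => c) y.
Proof.
  intros Cz k. exists O, (c + y). split; [exact Cz|].
  replace (c + y - (y + c)) with 0 by ring. rewrite Rabs_R0. apply inv10_pow_pos.
Qed.

Lemma luzin_sierpinski_sumset_countable (C : R -> Prop) (q : nat -> R) (L S : R -> Prop) :
  nowhere_dense C -> (forall q', lebesgue_null (near_translates C q')) ->
  meager (fun x => ~ rapidly_approximated q x) ->
  Luzin_set L -> Sierpinski_set S -> countable_set (fun z => sumset L S z /\ C z).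
Proof.
  intros Cnd Cnull Gq [_ HL] [_ HS].
  destruct (HS _ (Cnull q)) as [h Hh].
  destruct (HL _ Gq) as [f Hf].
  apply (countable_sub _ (fun z => (exists j, L (z - h j) /\ C (z - h j + h j))
                                \/ (exists i, S (z - f i) /\ C (f i + (z - f i))))).
  - intros z [[l [s [Ll [Ss ->]]]] Cz].
    destruct (classic (rapidly_approximated q l)) as [Gl|nGl].
    + destruct (Hh s) as [j <-]; [split; [exact Ss | exact (near_translates_of_sum C q l _ Gl Cz)]|].
      left. exists j. replace (l + h j - h j) with l by ring. split; assumption.
    + destruct (Hf l) as [i <-]; [split; assumption|].
      right. exists i. replace (f i + s - f i) with s by ring. split; assumption.
  - apply countable_union; apply countable_bigcup; intro i.
    + apply (countable_translate (fun y => L y /\ C (y + h i))).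
      apply HL, meager_of_nowhere_dense, nowhere_dense_translate, Cnd.
    + apply (countable_translate (fun y => S y /\ C (f i + y))).
      apply (countable_sub _ (fun y => S y /\ near_translates C (fun _ => f i) y)).
      * intros y [Sy Cy]. split; [exact Sy | apply near_translates_const, Cy].
      * apply HS, Cnull.
Qed.

Theorem mainTheorem20 :
  ~ (exists L S : R -> Prop,
        Luzin_set L /\ Sierpinski_set S /\ Bernstein_set (sumset L S)).
Proof.
  intros [L [S [HL [HS HB]]]].
  apply (bernstein_cantor_uncountable _ HB).
  apply (luzin_sierpinski_sumset_countable cantor rational_enum L S
           cantor_nowhere_dense cantor_near_translates_null); [|exact HL | exact HS].
  exact (not_rapidly_approximated_meager _ rational_enum_dense).
Qed.
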